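(* Let $G\ge 1$, let $\omega_1,\dots,\omega_G>0$ be weights with $\sum_{g=1}^G\omega_g=1$, let $P_1,\dots,P_G\in\mathbb{R}$, let $\beta>0$, let $\bar H\in[0,1]$ and set $C=2\bigl(\bar H-\tfrac12\bigr)\in[-1,1]$. Consider the equation for the unknown $\phi\in\mathbb{R}$ $$\sum_{g=1}^G \omega_g\,\frac{\tanh(\beta P_g)+\tanh(\beta\phi)}{1+\tanh(\beta P_g)\tanh(\beta\phi)}=C,$$ which is equivalent to $\sum_{g=1}^G \omega_g\,\tfrac12\bigl(1+\tanh(\beta(P_g+\phi))\bigr)=\bar H$. Let $\gamma\in\mathbb{R}$, define $A_g=\tanh(\beta P_g+\gamma)$ for $g=1,\dots,G$, and for $D\in[-1,1]$ define $$f(D)=\sum_{g=1}^G\omega_g\,\frac{A_g+D}{1+A_gD}-C,$$ so that with $D=\tanh(\beta\phi-\gamma)$ the equation above reads $f(D)=0$. Suppose that either (i) $\gamma<\min_g(-\beta P_g)=-\max_g(\beta P_g)$, or (ii) $\gamma>\max_g(-\beta P_g)=-\min_g(\beta P_g)$. Consider the Newton–Raphson iteration $D_{k+1}=D_k-f(D_k)/f'(D_k)$, with initial value $D_0=1$ in case (i) and $D_0=-1$ in case (ii). Then the sequence $(D_k)$ converges to the unique solution $D^\star\in[-1,1]$ of $f(D)=0$ (corresponding to the unique solution of the equation above); all terms of the sequence lie in $[-1,1]$; the sequence is monotonically decreasing in case (i) and monotonically increasing in case (ii); and the convergence is quadratic.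
   Context: This arises from enforcing, via a quadrature rule with nodes $\mathbf{x}_g$ and weights $\omega_g$, that the cell average of the THINC function $\tfrac12(1+\tanh(\beta(\mathcal{P}(\mathbf{x})+\phi)))$ equals a given volume fraction $\bar H$; here $P_g=\mathcal{P}(\mathbf{x}_g)$ are the values of a given polynomial at the quadrature nodes, and $\phi$ is the unknown shift. After solving for $D$, one recovers $\phi=\frac1\beta(\tanh^{-1}(D)+\gamma)$. *)

From Stdlib Require Import Reals List.
From Coquelicot Require Import Coquelicot.
Open Scope R_scope.

(* rsum G F = F 0 + F 1 + ... + F (G-1)  (the sum over g = 1..G, reindexed from 0) *)
Definition rsum (G : nat) (F : nat -> R) : R :=
  fold_right Rplus 0 (map F (seq 0 G)).

Fixpoint newton (f : R -> R) (D0 : R) (k : nat) : R :=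
  match k with
  | O => D0
  | S k' => let D := newton f D0 k' in D - f D / Derive f D
  end.

(* For x, y in [-1, 1],
   f(x) - f(y) = (x - y) S1(x, y) and f'(x) - S1(x, y) = (x - y) S2(x, y), where, per term and with
   k = w (1 - A^2) / ((1 + A x)^2 (1 + A y)) > 0, we have S1 = k (1 + A x), f' = k (1 + A y) and
   S2 = -A k.  In case (i) every A_g is negative and in case (ii) every A_g is positive, so with
   s = 1, resp. s = -1, the quantity s S2 is nonnegative: the Newton error
   x' - y = (x - y)^2 S2 / f'(x) keeps the iterates on the side of the root where they start, and
   they move monotonically towards it.  The denominators 1 + A_g t lie in [a, 2] for
   a = min_g (1 - |A_g|), whence S1 >= (a/2) f'(x) and s S2 <= f'(x) / a: the error contracts by the
   factor 1 - a/2, and it is bounded by (1/a) times the square of the previous one.  The root exists by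
   the intermediate value theorem, since f(-1) = -1 - C <= 0 <= 1 - C = f(1), and is unique since
   S1 > 0. *)

From Stdlib Require Import Reals List Lra Lia Psatz Ranalysis5.
From Coquelicot Require Import Coquelicot.
Open Scope R_scope.

Lemma rsum_S n F : rsum (S n) F = rsum n F + F n.
Proof.
  unfold rsum; rewrite seq_S, map_app, fold_right_app; simpl.
  induction (map F (seq 0 n)) as [|h l IH]; simpl; [lra | rewrite IH; lra].
Qed.

Lemma rsum_ext n F H : (forall g, (g < n)%nat -> F g = H g) -> rsum n F = rsum n H.
Proof.
  induction n as [|n IH]; intros E; [reflexivity|].
  rewrite !rsum_S, IH, E; [reflexivity | lia | intros g Hg; apply E; lia].
Qed.

Lemma rsum_le n F H : (forall g, (g < n)%nat -> F g <= H g) -> rsum n F <= rsum n H.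
Proof.
  induction n as [|n IH]; intros E; [unfold rsum; simpl; lra|].
  rewrite !rsum_S; apply Rplus_le_compat; [apply IH; intros g Hg|]; apply E; lia.
Qed.

Lemma rsum_nonneg n F : (forall g, (g < n)%nat -> 0 <= F g) -> 0 <= rsum n F.
Proof.
  induction n as [|n IH]; intros E; [unfold rsum; simpl; lra|].
  rewrite rsum_S; apply Rplus_le_le_0_compat; [apply IH; intros g Hg|]; apply E; lia.
Qed.

Lemma rsum_pos n F :
  (1 <= n)%nat -> (forall g, (g < n)%nat -> 0 < F g) -> 0 < rsum n F.
Proof.
  intros Hn E; destruct n as [|n]; [lia|]; rewrite rsum_S.
  assert (0 <= rsum n F) by (apply rsum_nonneg; intros g Hg; apply Rlt_le, E; lia).
  assert (0 < F n) by (apply E; lia).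
  lra.
Qed.

Lemma rsum_minus n F H : rsum n (fun g => F g - H g) = rsum n F - rsum n H.
Proof. induction n as [|n IH]; [unfold rsum; simpl; lra|]; rewrite !rsum_S, IH; lra. Qed.

Lemma rsum_scal n c F : rsum n (fun g => c * F g) = c * rsum n F.
Proof. induction n as [|n IH]; [unfold rsum; simpl; lra|]; rewrite !rsum_S, IH; lra. Qed.

Lemma is_derive_rsum n (F : nat -> R -> R) (F' : nat -> R) x :
  (forall g, (g < n)%nat -> is_derive (F g) x (F' g)) ->
  is_derive (fun y => rsum n (fun g => F g y)) x (rsum n F').
Proof.
  induction n as [|n IH]; intros E.
  - apply (is_derive_const (K := R_AbsRing) (V := R_NormedModule) 0 x).
  - apply is_derive_ext with (fun y => rsum n (fun g => F g y) + F n y).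
    { intros y; now rewrite rsum_S. }
    rewrite rsum_S; apply (is_derive_plus (K := R_AbsRing) (V := R_NormedModule)).
    + apply IH; intros g Hg; apply E; lia.
    + apply E; lia.
Qed.

Lemma exists_uniform_lower_bound n (F : nat -> R) :
  (forall g, (g < n)%nat -> 0 < F g) ->
  exists a, 0 < a /\ forall g, (g < n)%nat -> a <= F g.
Proof.
  induction n as [|n IH]; intros E; [exists 1; split; [lra | lia]|].
  destruct IH as [a [Ha Hle]]; [intros g Hg; apply E; lia|].
  exists (Rmin a (F n)); split.
  - apply Rmin_glb_lt; [lra | apply E; lia].
  - intros g Hg; destruct (Nat.eq_dec g n) as [->|Hne]; [apply Rmin_r|].
    eapply Rle_trans; [apply Rmin_l | apply Hle; lia].
Qed.

Lemma IVT_interv_le (f : R -> R) x y :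
  (forall t, x <= t <= y -> continuity_pt f t) -> x <= y -> f x <= 0 <= f y ->
  exists z, x <= z <= y /\ f z = 0.
Proof.
  intros Hc Hxy [Hx Hy].
  destruct (Req_dec (f x) 0) as [E|E]; [exists x; split; lra|].
  destruct (Req_dec (f y) 0) as [E'|E']; [exists y; split; lra|].
  destruct (IVT_interv f x y Hc) as [z Hz]; try lra.
  - destruct (Req_dec x y) as [->|]; lra.
  - exists z; exact Hz.
Qed.

Lemma is_lim_seq_contraction (u : nat -> R) (y q : R) :
  0 <= q < 1 -> (forall k, Rabs (u (S k) - y) <= q * Rabs (u k - y)) ->
  is_lim_seq u y.
Proof.
  intros Hq Hstep.
  assert (Hgeo : forall k, Rabs (u k - y) <= Rabs (u O - y) * q ^ k).
  { induction k as [|k IH]; simpl; [lra|].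
    eapply Rle_trans; [apply Hstep|].
    replace (Rabs (u O - y) * (q * q ^ k)) with (q * (Rabs (u O - y) * q ^ k)) by ring.
    apply Rmult_le_compat_l; lra. }
  assert (Hbound : is_lim_seq (fun k => Rabs (u O - y) * q ^ k) 0).
  { replace (Finite 0) with (Rbar_mult (Rabs (u O - y)) 0) by (simpl; f_equal; ring).
    apply is_lim_seq_scal_l, is_lim_seq_geom; rewrite Rabs_right; lra. }
  assert (Herr : is_lim_seq (fun k => u k - y) 0).
  { apply is_lim_seq_abs_0, is_lim_seq_le_le with (fun _ => 0) (fun k => Rabs (u O - y) * q ^ k).
    - intros k; split; [apply Rabs_pos | apply Hgeo].
    - apply is_lim_seq_const.
    - exact Hbound. }
  apply is_lim_seq_ext with (fun k => (u k - y) + y); [intros; ring|].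
  replace (Finite y) with (Rbar_plus 0 y) by (simpl; f_equal; ring).
  apply is_lim_seq_plus'; [exact Herr | apply is_lim_seq_const].
Qed.

Lemma tanh_bounds x : -1 < tanh x < 1.
Proof.
  unfold tanh, sinh, cosh; pose proof (exp_pos x); pose proof (exp_pos (- x)).
  split; apply Rmult_lt_reg_r with ((exp x + exp (- x)) / 2); try lra;
    field_simplify; lra.
Qed.

Lemma tanh_neg x : x < 0 -> tanh x < 0.
Proof.
  intros Hx; unfold tanh, sinh, cosh; pose proof (exp_pos x).
  assert (exp x < exp (- x)) by (apply exp_increasing; lra).
  apply Rdiv_neg_pos; lra.
Qed.

Lemma tanh_pos x : 0 < x -> 0 < tanh x.
Proof.
  intros Hx; unfold tanh, sinh, cosh; pose proof (exp_pos (- x)).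
  assert (exp (- x) < exp x) by (apply exp_increasing; lra).
  apply Rdiv_lt_0_compat; lra.
Qed.

(* P stands for f'(x), S1 for the divided difference f(x) / (x - y) at a root y, and
   S2 for (P - S1) / (x - y). *)
Lemma newton_step_error (s x y P S1 S2 c K : R) :
  s = 1 \/ s = -1 -> 0 < P -> 0 <= c -> c * P <= S1 -> 0 <= s * S2 <= K * P ->
  P - S1 = (x - y) * S2 -> 0 <= s * (x - y) ->
  let x' := x - (x - y) * S1 / P in
  0 <= s * (x' - y) /\ s * x' <= s * x /\
  Rabs (x' - y) <= (1 - c) * Rabs (x - y) /\ Rabs (x' - y) <= K * Rabs (x - y) ^ 2.
Proof.
  intros Hs HP Hc HS1 HS2 HPS He x'.
  assert (Habs : forall t, 0 <= s * t -> Rabs t = s * t).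
  { intros t Ht; destruct Hs as [-> | ->];
      [rewrite Rabs_right | rewrite Rabs_left1]; lra. }
  set (e := s * (x - y)) in *; set (q := (P - S1) / P).
  assert (Hq_e : q = e * (s * S2) / P).
  { assert (Hss : s * s = 1) by (destruct Hs as [-> | ->]; ring).
    unfold q, e; rewrite HPS.
    replace (s * (x - y) * (s * S2)) with (s * s * ((x - y) * S2)) by ring.
    rewrite Hss, Rmult_1_l; reflexivity. }
  assert (Hx' : s * (x' - y) = e * q) by (unfold x', e, q; field; lra).
  assert (Hq0 : 0 <= q) by (rewrite Hq_e; apply Rdiv_le_0_compat; [apply Rmult_le_pos|]; lra).
  assert (Hq1 : q <= 1 - c) by (unfold q; apply Rmult_le_reg_r with P; [lra|]; field_simplify; lra).
  assert (HqK : q <= e * K).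
  { rewrite Hq_e; apply Rmult_le_reg_r with P; [lra|]; field_simplify; [|lra]. nra. }
  assert (He' : 0 <= e * q) by (apply Rmult_le_pos; lra).
  rewrite (Habs (x' - y)), (Habs (x - y)), Hx'; fold e; [| lra | lra].
  split; [exact He'|]; split; [| split; nra].
  replace (s * x') with (e * q + s * y) by (rewrite <- Hx'; ring).
  replace (s * x) with (e + s * y) by (unfold e; ring).
  nra.
Qed.

Lemma mobius_denom_bounds (a b t : R) :
  0 < a -> a <= 1 - Rabs b -> -1 <= t <= 1 -> a <= 1 + b * t <= 2.
Proof. intros Ha Hb Ht; unfold Rabs in Hb; destruct Rcase_abs; split; nra. Qed.

Section MobiusTerm.

Variables (a b x : R).
Hypothesis Ha : 0 < a.
Hypothesis Hb : a <= 1 - Rabs b.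
Hypothesis Hx : -1 <= x <= 1.

Let Hb2 : 0 < 1 - b ^ 2.
Proof. unfold Rabs in Hb; destruct Rcase_abs; nra. Qed.

Lemma mobius_deriv_term_pos : 0 < (1 - b ^ 2) / (1 + b * x) ^ 2.
Proof.
  destruct (mobius_denom_bounds a b x); auto.
  apply Rdiv_lt_0_compat; [lra | apply pow_lt; lra].
Qed.

Variable y : R.
Hypothesis Hy : -1 <= y <= 1.

Let Hkernel : 0 < (1 - b ^ 2) / ((1 + b * x) ^ 2 * (1 + b * y)).
Proof.
  destruct (mobius_denom_bounds a b x), (mobius_denom_bounds a b y); auto.
  apply Rdiv_lt_0_compat; [lra | apply Rmult_lt_0_compat; [apply pow_lt|]; lra].
Qed.

Lemma mobius_slope_term_lb :
  a / 2 * ((1 - b ^ 2) / (1 + b * x) ^ 2) <= (1 - b ^ 2) / ((1 + b * x) * (1 + b * y)).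
Proof.
  destruct (mobius_denom_bounds a b x), (mobius_denom_bounds a b y); auto.
  set (k := (1 - b ^ 2) / ((1 + b * x) ^ 2 * (1 + b * y))) in Hkernel.
  replace (a / 2 * ((1 - b ^ 2) / (1 + b * x) ^ 2)) with (k * (a / 2 * (1 + b * y)))
    by (unfold k; field; lra).
  replace ((1 - b ^ 2) / ((1 + b * x) * (1 + b * y))) with (k * (1 + b * x))
    by (unfold k; field; lra).
  apply Rmult_le_compat_l; nra.
Qed.

Lemma mobius_curv_term_bounds (s : R) :
  s = 1 \/ s = -1 -> 0 <= - s * b ->
  0 <= s * (- b * (1 - b ^ 2) / ((1 + b * x) ^ 2 * (1 + b * y))) <=
       / a * ((1 - b ^ 2) / (1 + b * x) ^ 2).
Proof.
  intros Hs Hsb.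
  destruct (mobius_denom_bounds a b x), (mobius_denom_bounds a b y); auto.
  set (k := (1 - b ^ 2) / ((1 + b * x) ^ 2 * (1 + b * y))) in Hkernel.
  replace (s * (- b * (1 - b ^ 2) / ((1 + b * x) ^ 2 * (1 + b * y)))) with (k * (- s * b))
    by (unfold k; field; lra).
  replace (/ a * ((1 - b ^ 2) / (1 + b * x) ^ 2)) with (k * ((1 + b * y) / a))
    by (unfold k; field; lra).
  assert (Hv : 1 <= (1 + b * y) / a) by (apply Rmult_le_reg_r with a; [lra|]; field_simplify; lra).
  assert (- s * b < 1) by (unfold Rabs in Hb; destruct Rcase_abs, Hs; subst; nra).
  split; [apply Rmult_le_pos | apply Rmult_le_compat_l]; lra.
Qed.

End MobiusTerm.

Section MobiusResidual.

Variables (G : nat) (w A : nat -> R) (C : R).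

Definition mobius_res (D : R) : R :=
  rsum G (fun g => w g * ((A g + D) / (1 + A g * D))) - C.

Definition mobius_res_deriv (D : R) : R :=
  rsum G (fun g => w g * ((1 - A g ^ 2) / (1 + A g * D) ^ 2)).

Definition mobius_res_slope (x y : R) : R :=
  rsum G (fun g => w g * ((1 - A g ^ 2) / ((1 + A g * x) * (1 + A g * y)))).

Definition mobius_res_curv (x y : R) : R :=
  rsum G (fun g => w g * (- A g * (1 - A g ^ 2) / ((1 + A g * x) ^ 2 * (1 + A g * y)))).

Hypothesis HA : forall g, (g < G)%nat -> -1 < A g < 1.

Let Hdenom t g : -1 <= t <= 1 -> (g < G)%nat -> 0 < 1 + A g * t.
Proof. intros Ht Hg; destruct (HA g Hg), (Rle_dec 0 (A g)); nra. Qed.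

Lemma is_derive_mobius_res x : -1 <= x <= 1 -> is_derive mobius_res x (mobius_res_deriv x).
Proof.
  intros Hx; unfold mobius_res, mobius_res_deriv.
  rewrite <- (Rminus_0_r (rsum _ _)).
  apply (is_derive_minus (K := R_AbsRing) (V := R_NormedModule) _ (fun _ => C));
    [| apply (is_derive_const (K := R_AbsRing) (V := R_NormedModule))].
  apply (is_derive_rsum G (fun g D => w g * ((A g + D) / (1 + A g * D)))).
  intros g Hg; pose proof (Hdenom x g Hx Hg); auto_derive; [| field]; lra.
Qed.

Lemma Derive_mobius_res x : -1 <= x <= 1 -> Derive mobius_res x = mobius_res_deriv x.
Proof. intros Hx; apply is_derive_unique, is_derive_mobius_res, Hx. Qed.

Lemma mobius_res_sub x y : -1 <= x <= 1 -> -1 <= y <= 1 ->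
  mobius_res x - mobius_res y = (x - y) * mobius_res_slope x y.
Proof.
  intros Hx Hy; unfold mobius_res, mobius_res_slope.
  transitivity (rsum G (fun g => w g * ((A g + x) / (1 + A g * x)))
                - rsum G (fun g => w g * ((A g + y) / (1 + A g * y)))); [ring|].
  rewrite <- rsum_scal, <- rsum_minus; apply rsum_ext; intros g Hg.
  pose proof (Hdenom x g Hx Hg); pose proof (Hdenom y g Hy Hg); field; lra.
Qed.

Lemma mobius_res_deriv_sub x y : -1 <= x <= 1 -> -1 <= y <= 1 ->
  mobius_res_deriv x - mobius_res_slope x y = (x - y) * mobius_res_curv x y.
Proof.
  intros Hx Hy; unfold mobius_res_deriv, mobius_res_slope, mobius_res_curv.
  rewrite <- rsum_scal, <- rsum_minus; apply rsum_ext; intros g Hg.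
  pose proof (Hdenom x g Hx Hg); pose proof (Hdenom y g Hy Hg); field; lra.
Qed.

Hypothesis HG : (1 <= G)%nat.
Hypothesis Hw : forall g, (g < G)%nat -> 0 < w g.
Variable s : R.
Hypothesis Hs : s = 1 \/ s = -1.
Hypothesis HsA : forall g, (g < G)%nat -> 0 <= - s * A g.

Section Margin.

Variable a : R.
Hypothesis Ha : 0 < a.
Hypothesis Hmargin : forall g, (g < G)%nat -> a <= 1 - Rabs (A g).

Lemma mobius_res_deriv_pos x : -1 <= x <= 1 -> 0 < mobius_res_deriv x.
Proof.
  intros Hx; apply rsum_pos; auto; intros g Hg.
  apply Rmult_lt_0_compat; [auto | apply (mobius_deriv_term_pos a); auto].
Qed.

Lemma mobius_res_slope_lb x y : -1 <= x <= 1 -> -1 <= y <= 1 ->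
  a / 2 * mobius_res_deriv x <= mobius_res_slope x y.
Proof.
  intros Hx Hy; unfold mobius_res_deriv; rewrite <- rsum_scal; apply rsum_le; intros g Hg.
  pose proof (mobius_slope_term_lb a (A g) x Ha (Hmargin g Hg) Hx y Hy); pose proof (Hw g Hg).
  nra.
Qed.

Lemma mobius_res_curv_bounds x y : -1 <= x <= 1 -> -1 <= y <= 1 ->
  0 <= s * mobius_res_curv x y <= / a * mobius_res_deriv x.
Proof.
  intros Hx Hy; unfold mobius_res_curv, mobius_res_deriv; rewrite <- !rsum_scal.
  split; [apply rsum_nonneg | apply rsum_le]; intros g Hg;
    destruct (mobius_curv_term_bounds a (A g) x Ha (Hmargin g Hg) Hx y Hy s Hs (HsA g Hg));
    pose proof (Hw g Hg); nra.
Qed.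

Lemma mobius_res_root_unique x y : -1 <= x <= 1 -> -1 <= y <= 1 ->
  mobius_res x = 0 -> mobius_res y = 0 -> x = y.
Proof.
  intros Hx Hy Hfx Hfy.
  pose proof (mobius_res_sub x y Hx Hy) as E; rewrite Hfx, Hfy in E.
  pose proof (mobius_res_deriv_pos x Hx); pose proof (mobius_res_slope_lb x y Hx Hy).
  assert (0 < mobius_res_slope x y) by nra.
  nra.
Qed.

Lemma mobius_newton_step x y : -1 <= x <= 1 -> -1 <= y <= 1 ->
  mobius_res y = 0 -> 0 <= s * (x - y) ->
  let x' := x - mobius_res x / Derive mobius_res x in
  0 <= s * (x' - y) /\ s * x' <= s * x /\
  Rabs (x' - y) <= (1 - a / 2) * Rabs (x - y) /\ Rabs (x' - y) <= / a * Rabs (x - y) ^ 2.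
Proof.
  intros Hx Hy Hfy He.
  assert (Hfx : mobius_res x = (x - y) * mobius_res_slope x y).
  { rewrite <- (Rminus_0_r (mobius_res x)), <- Hfy; apply mobius_res_sub; auto. }
  rewrite Hfx, Derive_mobius_res by exact Hx.
  apply (newton_step_error s x y _ _ (mobius_res_curv x y)); auto.
  - apply mobius_res_deriv_pos, Hx.
  - lra.
  - apply mobius_res_slope_lb; auto.
  - apply mobius_res_curv_bounds; auto.
  - apply mobius_res_deriv_sub; auto.
Qed.

Lemma mobius_newton_iterates y : -1 <= y <= 1 -> mobius_res y = 0 ->
  forall k, -1 <= newton mobius_res s k <= 1 /\ 0 <= s * (newton mobius_res s k - y).
Proof.
  intros Hy Hfy; induction k as [|k [Hk Hek]]; [destruct Hs as [-> | ->]; simpl; lra|].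
  destruct (mobius_newton_step _ y Hk Hy Hfy Hek) as (Hside & Hmono & _).
  cbn [newton]; destruct Hs as [-> | ->]; lra.
Qed.

End Margin.

Hypothesis Hsum : rsum G w = 1.
Hypothesis HC : -1 <= C <= 1.

Lemma mobius_res_root_exists : exists y, -1 <= y <= 1 /\ mobius_res y = 0.
Proof.
  assert (Hend : forall e, e = 1 \/ e = -1 -> mobius_res e = e - C).
  { intros e He; unfold mobius_res; f_equal.
    transitivity (e * rsum G w); [| rewrite Hsum; ring].
    rewrite <- rsum_scal; apply rsum_ext; intros g Hg.
    pose proof (Hdenom e g ltac:(lra) Hg); destruct He as [-> | ->]; field; lra. }
  apply IVT_interv_le; [| lra | rewrite !Hend by auto; lra].
  intros t Ht; apply derivable_continuous_pt; exists (mobius_res_deriv t).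
  apply is_derive_Reals, is_derive_mobius_res, Ht.
Qed.

Theorem mobius_newton_converges :
  exists y,
    (-1 <= y <= 1 /\ mobius_res y = 0) /\
    (forall D, -1 <= D <= 1 -> mobius_res D = 0 -> D = y) /\
    is_lim_seq (newton mobius_res s) y /\
    (forall k, -1 <= newton mobius_res s k <= 1) /\
    (forall k, s * newton mobius_res s (S k) <= s * newton mobius_res s k) /\
    (exists M, 0 <= M /\ forall k,
       Rabs (newton mobius_res s (S k) - y) <= M * Rabs (newton mobius_res s k - y) ^ 2).
Proof.
  destruct (exists_uniform_lower_bound G (fun g => 1 - Rabs (A g))) as [a [Ha Hmargin]].
  { intros g Hg; destruct (HA g Hg); unfold Rabs; destruct Rcase_abs; lra. }
  assert (Ha1 : a <= 1) by (specialize (Hmargin O HG); pose proof (Rabs_pos (A O)); lra).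
  destruct mobius_res_root_exists as [y [Hy Hfy]]; exists y.
  pose proof (mobius_newton_iterates a Ha Hmargin y Hy Hfy) as Hit.
  pose proof (fun k => mobius_newton_step a Ha Hmargin _ y (proj1 (Hit k)) Hy Hfy (proj2 (Hit k)))
    as Hstep.
  split; [auto|]; split.
  { intros D HD HfD; apply (mobius_res_root_unique a Ha Hmargin); auto. }
  split; [apply is_lim_seq_contraction with (1 - a / 2); [lra | apply Hstep]|].
  split; [apply Hit|]; split; [apply Hstep|].
  exists (/ a); split; [apply Rlt_le, Rinv_0_lt_compat, Ha | apply Hstep].
Qed.

End MobiusResidual.

Theorem lemma1 (G : nat) (w P : nat -> R) (beta Hbar gamma : R)
  (HG : (1 <= G)%nat)
  (Hw : forall g, (g < G)%nat -> 0 < w g)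
  (Hsum : rsum G w = 1)
  (Hbeta : 0 < beta)
  (HH : 0 <= Hbar <= 1) :
  let C := 2 * (Hbar - 1 / 2) in
  let A := fun g => tanh (beta * P g + gamma) in
  let f := fun D => rsum G (fun g => w g * ((A g + D) / (1 + A g * D))) - C in
  (* case (i): gamma < min_g (- beta P_g), D_0 = 1, decreasing *)
  ((forall g, (g < G)%nat -> gamma < - (beta * P g)) ->
    exists Ds,
      (-1 <= Ds <= 1 /\ f Ds = 0) /\
      (forall D, -1 <= D <= 1 -> f D = 0 -> D = Ds) /\
      is_lim_seq (newton f 1) Ds /\
      (forall k, -1 <= newton f 1 k <= 1) /\
      (forall k, newton f 1 (S k) <= newton f 1 k) /\
      (exists M, 0 <= M /\ forall k,
         Rabs (newton f 1 (S k) - Ds) <= M * (Rabs (newton f 1 k - Ds)) ^ 2)) /\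
  (* case (ii): gamma > max_g (- beta P_g), D_0 = -1, increasing *)
  ((forall g, (g < G)%nat -> - (beta * P g) < gamma) ->
    exists Ds,
      (-1 <= Ds <= 1 /\ f Ds = 0) /\
      (forall D, -1 <= D <= 1 -> f D = 0 -> D = Ds) /\
      is_lim_seq (newton f (-1)) Ds /\
      (forall k, -1 <= newton f (-1) k <= 1) /\
      (forall k, newton f (-1) k <= newton f (-1) (S k)) /\
      (exists M, 0 <= M /\ forall k,
         Rabs (newton f (-1) (S k) - Ds) <= M * (Rabs (newton f (-1) k - Ds)) ^ 2)).
Proof.
  intros C A f; change f with (mobius_res G w A C).
  assert (HA : forall g, (g < G)%nat -> -1 < A g < 1) by (intros g _; apply tanh_bounds).
  assert (HC : -1 <= C <= 1) by (unfold C; lra).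
  split; intros Hgamma.
  - assert (HsA : forall g, (g < G)%nat -> 0 <= - 1 * A g).
    { intros g Hg; specialize (Hgamma g Hg); assert (A g < 0) by (apply tanh_neg; lra); lra. }
    destruct (mobius_newton_converges G w A C HA HG Hw 1 (or_introl eq_refl) HsA Hsum HC)
      as (y & Hroot & Huniq & Hlim & Hrange & Hmono & Hquad).
    exists y; do 4 (split; [assumption|]).
    split; [intros k; specialize (Hmono k); lra | exact Hquad].
  - assert (HsA : forall g, (g < G)%nat -> 0 <= - -1 * A g).
    { intros g Hg; specialize (Hgamma g Hg); assert (0 < A g) by (apply tanh_pos; lra); lra. }
    destruct (mobius_newton_converges G w A C HA HG Hw (-1) (or_intror eq_refl) HsA Hsum HC)
      as (y & Hroot & Huniq & Hlim & Hrange & Hmono & Hquad).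
    exists y; do 4 (split; [assumption|]).
    split; [intros k; specialize (Hmono k); lra | exact Hquad].
Qed.
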